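(* Let $s,s'\in H_A$ and $k>0$. Let $\bar s,\bar{s'}$ denote the forests obtained from $s$ and $s'$ by removing all nodes at depth $k$ or more. Then $s\sim_k s'$ if and only if $\bar s$ and $\bar{s'}$ are idempotent-and-commutative equivalent.
   Context: $H_A$ is the set of forests over the finite alphabet $A$ (finite ordered sequences of finite ordered $A$-labelled trees), with concatenation $+$; root nodes have depth $0$; $as$ is the tree with root $a$ and child forest $s$. Equivalences $\sim_k$: $\sim_0$ identifies all forests; for $s=a_1s_1+\cdots+a_rs_r$, $s\sim_{k+1}s'$ iff $\{(a_i,[s_i]_{\sim_k}):1\le i\le r\}$ equals the corresponding set for $s'$. Two forests are idempotent-and-commutative equivalent if one can be transformed into the other by finitely many operations: (i) $p(t_1+t_2)\to p(t_2+t_1)$ for a context $p$ and trees $t_1,t_2$; (ii) $pt\to p(t+t)$ for a tree $t$; (iii) $p(t+t)\to pt$ (a context is a forest with one leaf replaced by a hole, $pt$ the result of substituting $t$ into the hole). *)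

From mathcomp Require Import all_boot.
From Stdlib Require List.
Set Implicit Arguments. Unset Strict Implicit. Unset Printing Implicit Defensive.

(* Finite ordered A-labelled trees and forests.  [Node a s] is the tree "a s"
   with root label a and child forest s. *)
Inductive tree (A : Type) : Type := Node : A -> seq (tree A) -> tree A.
Arguments Node {A} _ _.
Definition forest (A : Type) := seq (tree A).

(* The equivalences ~_k : ~_0 is total; s ~_{k+1} s' iff the sets
   {(a_i, [s_i]_{~_k})} coincide, i.e. each pair of one set is a pair of the
   other (a pair (a,[c]) equals (a',[c']) iff a = a' and c ~_k c'). *)
Fixpoint simk (A : Type) (k : nat) (s s' : forest A) : Prop :=
  match k with
  | 0 => True
  | k'.+1 =>
      (forall a c, List.In (Node a c) s ->
         exists c', List.In (Node a c') s' /\ simk k' c c') /\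
      (forall a c', List.In (Node a c') s' ->
         exists c, List.In (Node a c) s /\ simk k' c c')
  end.

(* Remove all nodes at depth >= k (roots have depth 0). *)
Fixpoint trunc (A : Type) (k : nat) (s : forest A) : forest A :=
  match k with
  | 0 => [::]
  | k'.+1 => map (fun t => match t with Node a c => Node a (trunc k' c) end) s
  end.

(* Contexts: forests with one hole in place of a leaf.  The hole sits inside a
   sibling list: [Hole l r] is the forest l ++ [hole] ++ r, and [In l a p r]
   is l ++ [a (p)] ++ r. *)
Inductive context (A : Type) : Type :=
  | Hole : forest A -> forest A -> context A
  | InNode : forest A -> A -> context A -> forest A -> context A.

Fixpoint fill (A : Type) (p : context A) (t : forest A) : forest A :=
  match p with
  | Hole l r => l ++ t ++ r
  | InNode l a p' r => l ++ Node a (fill p' t) :: r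
  end.

Inductive ic_step (A : Type) : forest A -> forest A -> Prop :=
  | ic_swap p t1 t2 : ic_step (fill p [:: t1; t2]) (fill p [:: t2; t1])
  | ic_dup p t : ic_step (fill p [:: t]) (fill p [:: t; t])
  | ic_merge p t : ic_step (fill p [:: t; t]) (fill p [:: t]).

Inductive ic_equiv (A : Type) : forest A -> forest A -> Prop :=
  | ic_refl s : ic_equiv s s
  | ic_trans s s' s'' : ic_step s s' -> ic_equiv s' s'' -> ic_equiv s s''.

From mathcomp Require Import all_boot.
From Stdlib Require List.
Set Implicit Arguments. Unset Strict Implicit. Unset Printing Implicit Defensive.

(* Each ~_k is an equivalence that only looks at the set of labelled subtrees,
   is a congruence for concatenation and for putting a forest under a root,
   and satisfies s ~_k trunc k s.  Hence the operations (i)-(iii), which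
   preserve the set of siblings, preserve every ~_k; this gives one
   direction.  Conversely, by induction on k, if s ~_k s' then every tree of
   trunc k s' is IC-equivalent to some tree of trunc k s, so by duplicating
   and permuting, trunc k s absorbs trunc k s' into the concatenation of the
   two forests; symmetrically so does trunc k s', and commutativity of
   concatenation closes the chain. *)

Section SimK.
Variable A : Type.
Implicit Types (s u v X Y : forest A).

Lemma simk_refl k s : simk k s s.
Proof. by elim: k s => [|k IH] s //=; split=> a c Hc; exists c. Qed.

Lemma simk_sym k s s' : simk k s s' -> simk k s' s.
Proof.
elim: k s s' => [|k IH] s s' //= [Hl Hr]; split.
- by move=> a c /Hr [c' [Hc' Hcc']]; exists c'; split; last exact: IH.
- by move=> a c /Hl [c' [Hc' Hcc']]; exists c'; split; last exact: IH.
Qed.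

Lemma simk_trans k s1 s2 s3 : simk k s1 s2 -> simk k s2 s3 -> simk k s1 s3.
Proof.
elim: k s1 s2 s3 => [|k IH] s1 s2 s3 //= [H12 H21] [H23 H32]; split.
- move=> a c /H12 [c' [/H23 [c'' [Hc'' Hc'c'']] Hcc']].
  by exists c''; split; last exact: IH Hcc' Hc'c''.
- move=> a c /H32 [c' [/H21 [c'' [Hc'' Hc''c]] Hc'c]].
  by exists c''; split; last exact: IH Hc''c Hc'c.
Qed.

Lemma simk_same_mem k u v : (forall t, List.In t u <-> List.In t v) -> simk k u v.
Proof.
case: k => [|k] //= Huv; split=> a c Hc; exists c;
  by split; [apply/Huv | exact: simk_refl].
Qed.

Lemma simk_cat k u u' v v' :
  simk k u u' -> simk k v v' -> simk k (u ++ v) (u' ++ v').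
Proof.
case: k => [|k] //= [Hu Hu'] [Hv Hv']; split=> a c /List.in_app_iff.
- by case=> [/Hu|/Hv] [c' [Hc' ?]]; exists c'; split=> //; apply/List.in_app_iff; tauto.
- by case=> [/Hu'|/Hv'] [c' [Hc' ?]]; exists c'; split=> //; apply/List.in_app_iff; tauto.
Qed.

Lemma simk_node k (a : A) (c c' : forest A) :
  simk k c c' -> simk k.+1 [:: Node a c] [:: Node a c'].
Proof.
move=> Hcc' /=; split=> b d [] // [<- <-].
- by exists c'; split; first left.
- by exists c; split; first left.
Qed.

Lemma simk_fill p X Y :
  (forall k, simk k X Y) -> forall k, simk k (fill p X) (fill p Y).
Proof.
move=> HXY; elim: p => [l r|l a p IH r] k /=.
  by apply: simk_cat (simk_refl _ _) (simk_cat (HXY k) (simk_refl _ _)).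
case: k => [|k] //.
apply: simk_cat (simk_refl _ _) _.
exact: (simk_cat (u := [:: _]) (simk_node a (IH k)) (simk_refl _ _)).
Qed.

Lemma simk_ic_step X Y k : ic_step X Y -> simk k X Y.
Proof.
by case=> [p t1 t2|p t|p t]; apply: simk_fill => {}k; apply: simk_same_mem => x /=;
  tauto.
Qed.

Lemma simk_ic_equiv X Y k : ic_equiv X Y -> simk k X Y.
Proof.
elim=> [s|s s' s'' Hstep _ IH]; first exact: simk_refl.
exact: simk_trans (simk_ic_step k Hstep) IH.
Qed.

Definition trunc_node k (t : tree A) : tree A :=
  let: Node a c := t in Node a (trunc k c).

Lemma truncS k s : trunc k.+1 s = map (trunc_node k) s.
Proof. by []. Qed.

Lemma simk_trunc k s : simk k s (trunc k s).
Proof.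
elim: k s => [|k IH] s //; rewrite truncS /=; split.
- move=> a c Hc; exists (trunc k c); split; last exact: IH.
  exact: (List.in_map (trunc_node k) _ _ Hc).
- by move=> a c' /List.in_map_iff [[b c] [[<- <-] Hc]]; exists c; split.
Qed.

End SimK.

Section ICEquiv.
Variable A : Type.
Implicit Types (s u v X Y : forest A) (t : tree A).

Definition frame_context (l r : forest A) (p : context A) : context A :=
  match p with
  | Hole l' r' => Hole (l ++ l') (r' ++ r)
  | InNode l' a q r' => InNode (l ++ l') a q (r' ++ r)
  end.

Lemma fill_frame_context l r p X : fill (frame_context l r p) X = l ++ fill p X ++ r.
Proof. by case: p => [l' r'|l' a q r'] /=; rewrite -!catA. Qed.

Lemma ic_step_frame l r X Y : ic_step X Y -> ic_step (l ++ X ++ r) (l ++ Y ++ r).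
Proof.
by case=> [p t1 t2|p t|p t]; rewrite -!fill_frame_context; constructor.
Qed.

Lemma ic_step_node a X Y : ic_step X Y -> ic_step [:: Node a X] [:: Node a Y].
Proof.
case=> [p t1 t2|p t|p t].
- exact: (ic_swap (InNode [::] a p [::])).
- exact: (ic_dup (InNode [::] a p [::])).
- exact: (ic_merge (InNode [::] a p [::])).
Qed.

Lemma ic_step_sym X Y : ic_step X Y -> ic_step Y X.
Proof. by case=> *; constructor. Qed.

Lemma ic_equiv_trans X Y Z : ic_equiv X Y -> ic_equiv Y Z -> ic_equiv X Z.
Proof. by elim=> // s s' s'' Hstep _ IH /IH; apply: ic_trans. Qed.

Lemma ic_equiv_step X Y : ic_step X Y -> ic_equiv X Y.
Proof. by move=> Hstep; apply: ic_trans Hstep (ic_refl _). Qed.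

Lemma ic_equiv_sym X Y : ic_equiv X Y -> ic_equiv Y X.
Proof.
elim=> [s|s s' s'' Hstep _ IH]; first exact: ic_refl.
exact: ic_equiv_trans IH (ic_equiv_step (ic_step_sym Hstep)).
Qed.

Lemma ic_equiv_frame l r X Y : ic_equiv X Y -> ic_equiv (l ++ X ++ r) (l ++ Y ++ r).
Proof.
elim=> [s|s s' s'' Hstep _ IH]; first exact: ic_refl.
exact: ic_trans (ic_step_frame l r Hstep) IH.
Qed.

Lemma ic_equiv_cat X X' Y Y' :
  ic_equiv X X' -> ic_equiv Y Y' -> ic_equiv (X ++ Y) (X' ++ Y').
Proof.
move=> /(ic_equiv_frame [::] Y) HX /(ic_equiv_frame X' [::]); rewrite !cats0.
exact: ic_equiv_trans.
Qed.

Lemma ic_equiv_node a X Y : ic_equiv X Y -> ic_equiv [:: Node a X] [:: Node a Y].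
Proof.
elim=> [s|s s' s'' Hstep _ IH]; first exact: ic_refl.
exact: ic_trans (ic_step_node a Hstep) IH.
Qed.

Lemma ic_equiv_rot1 t u : ic_equiv (t :: u) (u ++ [:: t]).
Proof.
elim: u => [|y u IH]; first exact: ic_refl.
apply: ic_trans (ic_swap (Hole [::] u) t y) _.
exact: (ic_equiv_cat (ic_refl [:: y]) IH).
Qed.

Lemma ic_equiv_catC u v : ic_equiv (u ++ v) (v ++ u).
Proof.
elim: u => [|t u IH]; first by rewrite cats0; apply: ic_refl.
apply: ic_equiv_trans (ic_equiv_rot1 _ _) _.
apply: ic_equiv_trans (ic_equiv_cat IH (ic_refl [:: t])) _.
rewrite -catA; apply: ic_equiv_cat (ic_refl v) _.
exact: ic_equiv_sym (ic_equiv_rot1 _ _).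
Qed.

Lemma ic_equiv_dup_mem t u : List.In t u -> ic_equiv u (t :: u).
Proof.
move=> Htu; have [l [r ->]] := List.in_split _ _ Htu.
apply: ic_trans (ic_dup (Hole l r) t) _ => /=.
by have := ic_equiv_cat (ic_equiv_catC l [:: t]) (ic_refl (t :: r)); rewrite -!catA.
Qed.

Lemma ic_equiv_absorb u v :
  (forall t', List.In t' v -> exists t, List.In t u /\ ic_equiv [:: t] [:: t']) ->
  ic_equiv u (v ++ u).
Proof.
elim: v => [|t' v IH] Hv; first exact: ic_refl.
have [t [Ht Htt']] := Hv t' (or_introl erefl).
apply: ic_equiv_trans (IH (fun x Hx => Hv x (or_intror Hx))) _.
have Hvu : List.In t (v ++ u) by apply/List.in_app_iff; right.
exact: ic_equiv_trans (ic_equiv_dup_mem Hvu) (ic_equiv_cat Htt' (ic_refl _)).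
Qed.

Lemma ic_equiv_trunc_simk k s s' : simk k s s' -> ic_equiv (trunc k s) (trunc k s').
Proof.
elim: k s s' => [|k IH] s s'; first by move=> _; apply: ic_refl.
rewrite !truncS => -[Hs Hs'].
have absorb u u' :
    (forall a c', List.In (Node a c') u' ->
       exists c, List.In (Node a c) u /\ simk k c c') ->
    ic_equiv (map (trunc_node k) u) (map (trunc_node k) u' ++ map (trunc_node k) u).
  move=> Hu'; apply: ic_equiv_absorb => _ /List.in_map_iff [[a c'] [<- Hc']].
  have [c [Hc Hcc']] := Hu' _ _ Hc'.
  exists (trunc_node k (Node a c)); split; first exact: List.in_map.
  exact: ic_equiv_node (IH _ _ Hcc').
apply: ic_equiv_trans (absorb _ _ Hs') _.
apply: ic_equiv_trans (ic_equiv_catC _ _) (ic_equiv_sym (absorb _ _ _)).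
by move=> a c /Hs [c' [Hc' Hcc']]; exists c'; split; last exact: simk_sym.
Qed.

End ICEquiv.

Theorem lemma5 (A : finType) (s s' : forest A) (k : nat) :
  0 < k -> (simk k s s' <-> ic_equiv (trunc k s) (trunc k s')).
Proof.
move=> _; split; first exact: ic_equiv_trunc_simk.
move=> /(simk_ic_equiv k) Htrunc.
apply: simk_trans (simk_trunc k s) _.
exact: simk_trans Htrunc (simk_sym (simk_trunc k s')).
Qed.
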